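(* Let $i\geq1$ and let $T$ be an SSRT of partition shape $\lambda$ such that $\lambda$ has an addable node in column $i+1$. Then, as multisets, $$H_i(\mathrm{tjdt}_{i+1}(T))\cup\{f_{i+1}(T)\}=H_{i+1}(T).$$
   Context: SSRTs (French convention, rows numbered from bottom, $(p,q)$ = row $p$, column $q$): fillings of a partition shape by positive integers weakly decreasing along rows left to right and strictly decreasing up columns. Backward jeu de taquin slide $\mathrm{jdt}_j(T)$ from the addable node in column $j$: the empty box $c=(p,q)$, starting at the addable node, is filled by sliding in the entry from whichever of $(p-1,q)$, $(p,q-1)$ (that exist) holds the smaller entry, ties going to $(p-1,q)$; this repeats until the empty box is $(1,1)$. $H_j(T)$ denotes the multiset of entries of $T$ that move horizontally during the computation of $\mathrm{jdt}_j(T)$, and $H_1(T)=\varnothing$. With $T_{(p,q)}=0$ outside $\lambda$ and $T_{(0,q)}=\infty$, $f_{i+1}(T)=T_{(r,i)}$ where $r$ is the largest integer with $(r,i)\in\lambda$ and $T_{(r,i)}<T_{(r-1,i+1)}$ (the first entry moving horizontally in $\mathrm{jdt}_{i+1}(T)$), and $\mathrm{tjdt}_{i+1}(T)$ is obtained from $T$ by removing $T_{(r,i)}$ and sliding all entries above it in column $i$ down by one row. *)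

From mathcomp Require Import all_boot.
Set Implicit Arguments. Unset Strict Implicit. Unset Printing Implicit Defensive.

(* Conventions (French, 1-indexed): a shape lam : seq nat lists row lengths,
   row 1 (bottom) first.  Cell (p,q) = row p, column q.  A filling is a
   function T : nat -> nat -> nat (values outside the shape irrelevant). *)

Definition is_part (lam : seq nat) : bool :=
  sorted geq lam && all (fun l => 0 < l) lam.

Definition in_shape (lam : seq nat) (p q : nat) : bool :=
  [&& 0 < p, 0 < q & q <= nth 0 lam p.-1].

Definition colLen (lam : seq nat) (q : nat) : nat := count (fun l => q <= l) lam.

Definition is_SSRT (lam : seq nat) (T : nat -> nat -> nat) : Prop :=
  [/\ is_part lam,
      (forall p q, in_shape lam p q -> 0 < T p q),
      (forall p q, in_shape lam p q.+1 -> T p q.+1 <= T p q) &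
      (forall p q, in_shape lam p.+1 q -> T p.+1 q < T p q)].

Definition addable (lam : seq nat) (r j : nat) : bool :=
  [&& 0 < r, 0 < j, ~~ in_shape lam r j, nth 0 lam r.-1 == j.-1
    & is_part (incr_nth lam r.-1)].

Definition has_addable_col (lam : seq nat) (j : nat) : Prop :=
  exists r, addable lam r j.

Definition slide_upd (S : nat -> nat -> nat) (p q a b v : nat) : nat -> nat -> nat :=
  fun x y => if (x == p) && (y == q) then v
             else if (x == a) && (y == b) then 0 else S x y.

(* Backward jeu de taquin with the empty box at (p,q); returns the list of
   entries that move horizontally, in order. *)
Fixpoint slideH (lam : seq nat) (fuel : nat) (S : nat -> nat -> nat) (p q : nat)
  : seq nat :=
  match fuel with
  | 0 => [::]
  | fuel'.+1 =>
    if (p == 1) && (q == 1) then [::] else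
    let dn := in_shape lam p.-1 q in
    let lf := in_shape lam p q.-1 in
    if lf && (~~ dn || (S p q.-1 < S p.-1 q)) then
      S p q.-1 :: slideH lam fuel' (slide_upd S p q p q.-1 (S p q.-1)) p q.-1
    else if dn then
      slideH lam fuel' (slide_upd S p q p.-1 q (S p.-1 q)) p.-1 q
    else [::]
  end.

(* H_j(T): entries moving horizontally in jdt_j(T), started from the addable
   node of column j, which is the cell (colLen lam j + 1, j); H_1 = empty. *)
Definition Hset (lam : seq nat) (T : nat -> nat -> nat) (j : nat) : seq nat :=
  if j == 1 then [::]
  else let r0 := (colLen lam j).+1 in slideH lam (r0 + j) T r0 j.

Definition Tz (lam : seq nat) (T : nat -> nat -> nat) (p q : nat) : nat :=
  if in_shape lam p q then T p q else 0.

(* condition T_(r,j-1) < T_(r-1,j), with T_(0,j) = infinity *)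
Definition fcond (lam : seq nat) (T : nat -> nat -> nat) (j r : nat) : bool :=
  (r == 1) || (T r j.-1 < Tz lam T r.-1 j).

Definition frow (lam : seq nat) (T : nat -> nat -> nat) (j : nat) : nat :=
  \max_(1 <= r < (colLen lam j.-1).+1 | fcond lam T j r) r.

Definition fval (lam : seq nat) (T : nat -> nat -> nat) (j : nat) : nat :=
  T (frow lam T j) j.-1.

(* tjdt_j(T): remove T_(r,j-1) and slide entries above it in column j-1 down *)
Definition tjdt_shape (lam : seq nat) (j : nat) : seq nat :=
  let c := colLen lam j.-1 in
  [seq l <- set_nth 0 lam c.-1 (nth 0 lam c.-1).-1 | 0 < l].

Definition tjdt (lam : seq nat) (T : nat -> nat -> nat) (j : nat) : nat -> nat -> nat :=
  fun p q => if (q == j.-1) && (frow lam T j <= p) then T p.+1 q else T p q.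

From mathcomp Require Import all_boot zify_ssreflect.
Set Implicit Arguments. Unset Strict Implicit. Unset Printing Implicit Defensive.

(* In jdt_{i+1}(T) the empty box first falls down column i+1 to the row r of
   f_{i+1}(T) and then takes f_{i+1}(T) = T(r,i) from its left.  In
   tjdt_{i+1}(T) the entries of column i above row r have moved down one row,
   so in jdt_i of it the empty box, starting at the top of column i, also falls
   down to (r,i): rows weakly decrease, so it never goes left on the way.  From
   the box (r,i) on, a slide only reads the cells weakly south-west of (r,i),
   where the two fillings and the two shapes coincide; hence both slides move
   the same entries horizontally from there on. *)

Definition southwest (p q x y : nat) : bool :=
  [&& 0 < x, x <= p, y <= q & x + y < p + q].

Definition eq_southwest (p q : nat) (S S0 : nat -> nat -> nat) : Prop :=
  forall x y, southwest p q x y -> S x y = S0 x y.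

Lemma southwest_trans p q a b x y :
  a <= p -> b <= q -> southwest a b x y -> southwest p q x y.
Proof. by rewrite /southwest; lia. Qed.

Lemma slide_upd_southwest S p q a b v x y :
  a + b <= p + q -> southwest a b x y -> slide_upd S p q a b v x y = S x y.
Proof.
rewrite /southwest /slide_upd => le_ab /and4P[_ _ _ lt_xy].
case: ifP => [/andP[/eqP ex /eqP ey] | _]; first lia.
by case: ifP => // /andP[/eqP ex /eqP ey]; lia.
Qed.

Lemma eq_southwest_slide_upd S S0 p q a b v :
  a <= p -> b <= q -> a + b < p + q ->
  eq_southwest p q S S0 -> eq_southwest a b (slide_upd S p q a b v) S0.
Proof.
move=> le_ap le_bq lt_ab eqS x y sw_xy.
by rewrite slide_upd_southwest ?(ltnW lt_ab) // eqS // (southwest_trans le_ap le_bq).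
Qed.

Lemma slideH_ext lam1 lam2 fuel S1 S2 p q :
  (forall x y, southwest p q x y ->
     S1 x y = S2 x y /\ in_shape lam1 x y = in_shape lam2 x y) ->
  slideH lam1 fuel S1 p q = slideH lam2 fuel S2 p q.
Proof.
elim: fuel S1 S2 p q => [|fuel IH] S1 S2 p q eq12 //=; case: ifP => // _.
have step a b v : a <= p -> b <= q -> a + b < p + q ->
    slideH lam1 fuel (slide_upd S1 p q a b v) a b =
    slideH lam2 fuel (slide_upd S2 p q a b v) a b.
  move=> le_ap le_bq lt_ab; apply: IH => x y sw_xy.
  rewrite !slide_upd_southwest ?(ltnW lt_ab) //.
  exact: eq12 (southwest_trans le_ap le_bq sw_xy).
have eq_shape x y : x <= p -> y <= q -> x + y < p + q ->
    in_shape lam1 x y = in_shape lam2 x y.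
  move=> le_xp le_yq lt_xy; case: (posnP x) => [->|x_gt0]; first by [].
  by have [] := eq12 x y; rewrite /southwest; lia.
have eq_left : in_shape lam1 p q.-1 = in_shape lam2 p q.-1.
  case: q {eq12 step eq_shape} (eq_shape p q.-1) => [|q] /=; last by apply; lia.
  by rewrite /in_shape !andbF.
have eq_down : in_shape lam1 p.-1 q = in_shape lam2 p.-1 q.
  case: p {eq12 step eq_shape eq_left} (eq_shape p.-1 q) => [|p] /=; last by apply; lia.
  by rewrite /in_shape.
have eq_val x y : southwest p q x y -> S1 x y = S2 x y by move=> /eq12[].
rewrite eq_left eq_down.
case: (boolP (in_shape lam2 p q.-1)) => [left_in | _] /=; last first.
  case: ifP => // down_in.
  have p_gt1 : 1 < p by move: down_in; rewrite /in_shape; lia.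
  by rewrite (eq_val p.-1 q) ?step //; rewrite /southwest; lia.
rewrite (eq_val p q.-1); last by move: left_in; rewrite /in_shape /southwest; lia.
case: (boolP (in_shape lam2 p.-1 q)) => [down_in | _] /=; last first.
  by rewrite step //; move: left_in; rewrite /in_shape; lia.
rewrite (eq_val p.-1 q); last by move: down_in; rewrite /in_shape /southwest; lia.
by case: ifP => _; rewrite step //; move: left_in down_in; rewrite /in_shape; lia.
Qed.

Lemma slideH_col1 lam fuel S p : slideH lam fuel S p 1 = [::].
Proof.
elim: fuel S p => [|fuel IH] S p //=; case: ifP => // _.
by rewrite {1}/in_shape andbF /=; case: ifP.
Qed.

Lemma slideH_step_left lam fuel S p q :
  in_shape lam p q.-1 -> (in_shape lam p.-1 q -> S p q.-1 < S p.-1 q) ->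
  slideH lam fuel.+1 S p q =
  S p q.-1 :: slideH lam fuel (slide_upd S p q p q.-1 (S p q.-1)) p q.-1.
Proof.
move=> left_in lt_left /=; rewrite left_in ifF /=; last first.
  by move: left_in; rewrite /in_shape; lia.
by case: (boolP (in_shape lam p.-1 q)) => [/lt_left -> | _].
Qed.

Lemma slideH_step_down lam fuel S p q :
  in_shape lam p.-1 q -> ~~ (in_shape lam p q.-1 && (S p q.-1 < S p.-1 q)) ->
  slideH lam fuel.+1 S p q = slideH lam fuel (slide_upd S p q p.-1 q (S p.-1 q)) p.-1 q.
Proof.
move=> down_in no_left /=; rewrite down_in ifF /=; last first.
  by move: down_in; rewrite /in_shape; lia.
by rewrite ifF // (negbTE no_left).
Qed.

Lemma slideH_down lam S0 k fuel S p q :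
  eq_southwest p q S S0 ->
  (forall m, p - k < m <= p -> [/\ 1 < m, in_shape lam m.-1 q &
     ~~ (in_shape lam m q.-1 && (S0 m q.-1 < S0 m.-1 q))]) ->
  k <= p ->
  exists2 S', eq_southwest (p - k) q S' S0 &
    slideH lam (fuel + k) S p q = slideH lam fuel S' (p - k) q.
Proof.
elim: k S p => [|k IH] S p eqS down_m le_kp; first by exists S; rewrite ?subn0 ?addn0.
have [p_gt1 down_in no_left] := down_m p ltac:(lia).
rewrite addnS slideH_step_down //; last first.
  case: (boolP (in_shape lam p q.-1)) no_left => //= left_in.
  have q_gt0 : 0 < q by move: left_in; rewrite /in_shape; lia.
  by rewrite !eqS // /southwest; lia.
have eqS1 : eq_southwest p.-1 q (slide_upd S p q p.-1 q (S p.-1 q)) S0.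
  by apply: eq_southwest_slide_upd eqS; lia.
have [S' eqS' ->] := IH _ p.-1 eqS1 (fun m range_m => down_m m ltac:(lia)) ltac:(lia).
by exists S'; rewrite (_ : p - k.+1 = p.-1 - k) //; lia.
Qed.

Lemma leq_colLen lam q x : sorted geq lam -> 0 < q -> 0 < x ->
  (x <= colLen lam q) = (q <= nth 0 lam x.-1).
Proof.
move=> + q_gt0; elim: lam x => [|a l IH] [|x] //= sorted_al _.
  by rewrite nth_nil; lia.
have sorted_l := path_sorted sorted_al.
have le_la k : nth 0 l k <= a.
  have /allP le_a := order_path_min (fun _ _ _ h1 h2 => leq_trans h2 h1) sorted_al.
  by case: (ltnP k (size l)) => [/(mem_nth 0)/le_a | ?]; last rewrite nth_default.
rewrite /colLen /= -/(colLen l q); have [le_qa | lt_aq] := leqP q a.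
  by case: x => [|x] /=; rewrite add1n ltnS // IH.
have := IH 1 sorted_l isT; have := le_la 0; have := le_la x.-1.
by case: x => [|x] /=; lia.
Qed.

Lemma in_shape_colLen lam x q : sorted geq lam -> 0 < q ->
  in_shape lam x q = (0 < x) && (x <= colLen lam q).
Proof.
move=> sorted_lam q_gt0; rewrite /in_shape q_gt0.
by case: (posnP x) => [-> | x_gt0] //=; rewrite leq_colLen.
Qed.

Lemma bigmax_idx_spec (P : pred nat) n (M := \max_(1 <= r < n.+1 | P r) r) :
  [/\ M = 0 \/ P M, M <= n & forall m, M < m <= n -> ~~ P m].
Proof.
rewrite {}/M; elim: n => [|n [IH1 IH2 IH3]].
  by rewrite big_geq //; split => [||m]; [left | | lia].
rewrite big_mkcond big_nat_recr //= -big_mkcond.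
set M := \max_(1 <= r < n.+1 | P r) r in IH1 IH2 IH3 *.
case: (boolP (P n.+1)) => [Pn | notPn].
  by rewrite (maxn_idPr _); [split => [||m]; [right | | lia] | lia].
rewrite maxn0; split => [||m range_m]; [by [] | lia |].
have [lt_mn | ge_mn] := ltnP m n.+1; first by apply: IH3; lia.
by have -> : m = n.+1 by lia.
Qed.

Lemma nth_filter_pos s k : (forall j, j.+1 < size s -> 0 < nth 0 s j) ->
  nth 0 [seq l <- s | 0 < l] k = nth 0 s k.
Proof.
elim: s k => [|a [|b l] IH] k //= pos_s.
  by case: a pos_s => [|a] _; case: k => [|[|k]].
rewrite (pos_s 0) //; case: k => //= k; apply: IH => j lt_j.
exact: (pos_s j.+1).
Qed.

Section TjdtShape.

Variables (lam : seq nat) (i : nat).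
Hypotheses (lam_part : is_part lam) (i_gt1 : 1 < i).
Let c := colLen lam i.
Hypothesis row_c : nth 0 lam c.-1 = i.

Let c_gt0 : 0 < c.
Proof.
case/andP: lam_part => sorted_lam _.
have := leq_colLen (x := 1) sorted_lam (ltnW i_gt1) isT; rewrite -/c.
case: (posnP c) => // c0; have := row_c; rewrite c0 /= => row0.
by rewrite row0 leqnn.
Qed.

Let c_le_size : c <= size lam. Proof. exact: count_size. Qed.

Let nth_tjdt_shape k :
  nth 0 (tjdt_shape lam i.+1) k = if k == c.-1 then i.-1 else nth 0 lam k.
Proof.
case/andP: lam_part => _ /(all_nthP 0) lam_pos.
rewrite nth_filter_pos => [|j]; rewrite ?size_set_nth nth_set_nth /= -/c row_c //.
by case: eqP => _ lt_j; [lia | apply: lam_pos; lia].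
Qed.

Lemma in_shape_tjdt_shape x y :
  in_shape (tjdt_shape lam i.+1) x y = in_shape lam x y && ~~ ((x == c) && (y == i)).
Proof.
rewrite /in_shape nth_tjdt_shape.
case: (posnP x) => [-> | x_gt0] //=; case: (posnP y) => [-> | y_gt0] //=.
case: (eqVneq x c) => [-> | ne_xc] /=; first by rewrite eqxx row_c; lia.
by rewrite (_ : (x.-1 == c.-1) = false) ?andbT //; lia.
Qed.

Lemma colLen_tjdt_shape : colLen (tjdt_shape lam i.+1) i = c.-1.
Proof.
rewrite /colLen count_filter (@eq_count _ _ (fun l => i <= l)); last first.
  by move=> l /=; lia.
rewrite count_set_nth_ltn /= -/c; last lia.
rewrite -/(colLen lam i) -/c row_c leqnn (_ : (i <= i.-1) = false) //; lia.
Qed.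

End TjdtShape.

Section FirstHorizontalMove.

Variables (i : nat) (lam : seq nat) (T : nat -> nat -> nat) (r : nat).
Hypotheses (i_gt0 : 0 < i) (T_SSRT : is_SSRT lam T) (addable_r : addable lam r i.+1).

Let lam_part : is_part lam. Proof. by case: T_SSRT. Qed.
Let sorted_lam : sorted geq lam. Proof. by case/andP: lam_part. Qed.

Let c := colLen lam i.
Let r0 := (colLen lam i.+1).+1.
Let f := frow lam T i.+1.

Let r_gt0 : 0 < r. Proof. by case/and5P: addable_r. Qed.
Let row_r : nth 0 lam r.-1 = i. Proof. by case/and5P: addable_r => _ _ _ /eqP. Qed.
Let r_le_c : r <= c. Proof. by rewrite /c leq_colLen // row_r. Qed.

Let in_col x : in_shape lam x i = (0 < x) && (x <= c).
Proof. exact: in_shape_colLen. Qed.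

Let in_col_succ x : in_shape lam x i.+1 = (0 < x) && (x < r0).
Proof. exact: in_shape_colLen. Qed.

(* Row c is at least i long by definition of c, and shorter than i+1 since it
   lies weakly above row r, which has length i. *)
Lemma nth_colLen_addable : nth 0 lam c.-1 = i.
Proof.
have r_gt_succ : ~~ (r <= colLen lam i.+1) by rewrite leq_colLen // row_r ltnn.
have := leq_colLen (x := c) sorted_lam i_gt0.
have := leq_colLen (x := c) sorted_lam (ltn0Sn i).
rewrite -/c leqnn; lia.
Qed.

Lemma frow_spec :
  [/\ 0 < f, f <= c, fcond lam T i.+1 f & forall m, f < m <= c -> ~~ fcond lam T i.+1 m].
Proof.
have [f_cases f_le_c f_max] : [/\ f = 0 \/ fcond lam T i.+1 f, f <= c
    & forall m, f < m <= c -> ~~ fcond lam T i.+1 m] := bigmax_idx_spec _ _.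
have f_gt0 : 0 < f by case: (posnP f) (f_max 1) => // ->; rewrite /fcond eqxx; lia.
by case: f_cases => [|fcond_f]; [lia | split].
Qed.

Lemma Hset_succ_split :
  exists2 S, eq_southwest f i S T & Hset lam T i.+1 = T f i :: slideH lam (f + i) S f i.
Proof.
have [f_gt0 f_le_c fcond_f above_f] := frow_spec.
have Tz_col_succ x : 0 < x < r0 -> Tz lam T x i.+1 = T x i.+1.
  by move=> range_x; rewrite /Tz in_col_succ range_x.
have f_le_r0 : f <= r0.
  move: fcond_f; rewrite /fcond /Tz in_col_succ.
  by case: (f == 1) / eqP => [-> | ne_f1] //=; case: ifP; lia.
have no_left_above m : r0 - (r0 - f) < m <= r0 -> [/\ 1 < m, in_shape lam m.-1 i.+1 &
    ~~ (in_shape lam m i.+1.-1 && (T m i.+1.-1 < T m.-1 i.+1))].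
  move=> range_m; rewrite in_col_succ; split; [lia | lia |].
  apply/negP => /andP[in_m lt_m]; have m_le_c : m <= c by move: in_m; rewrite in_col; lia.
  have := above_f m; rewrite /fcond Tz_col_succ /= ?lt_m ?orbT; lia.
have [S eqS slide_down] := @slideH_down lam T (r0 - f) (f + i.+1) T r0 i.+1
    (fun _ _ _ => erefl) no_left_above (leq_subr _ _).
rewrite subKn // in eqS slide_down.
rewrite /Hset ifF; last lia.
rewrite (_ : r0 + i.+1 = f + i.+1 + (r0 - f)) -/r0 ?slide_down; last lia.
rewrite addnS slideH_step_left /=; first last.
- move=> down_in; have f_gt1 : 1 < f by move: down_in; rewrite in_col_succ; lia.
  rewrite !eqS ?/southwest; try lia.
  move: fcond_f; rewrite /fcond Tz_col_succ /=; last lia.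
  by case: eqP => [f1 | _] //=; lia.
- by rewrite in_col; lia.
rewrite eqS /southwest; last lia.
exists (slide_upd S f i.+1 f i (T f i)) => //.
by apply: eq_southwest_slide_upd eqS; lia.
Qed.

Lemma Hset_tjdt_split : 1 < i ->
  exists2 S, eq_southwest f i S (tjdt lam T i.+1) &
    Hset (tjdt_shape lam i.+1) (tjdt lam T i.+1) i =
    slideH (tjdt_shape lam i.+1) (f + i) S f i.
Proof.
move=> i_gt1; have [f_gt0 f_le_c _ _] := frow_spec.
have in_shape' := in_shape_tjdt_shape lam_part i_gt1 nth_colLen_addable.
rewrite /Hset ifF; last lia.
rewrite (colLen_tjdt_shape lam_part i_gt1 nth_colLen_addable) -/c prednK; last lia.
rewrite (_ : c + i = f + i + (c - f)); last lia.
have row_weak : forall p q, in_shape lam p q.+1 -> T p q.+1 <= T p q by case: T_SSRT.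
have no_left_above m : c - (c - f) < m <= c ->
    [/\ 1 < m, in_shape (tjdt_shape lam i.+1) m.-1 i &
    ~~ (in_shape (tjdt_shape lam i.+1) m i.-1 &&
        (tjdt lam T i.+1 m i.-1 < tjdt lam T i.+1 m.-1 i))].
  move=> range_m; rewrite !in_shape' in_col; split; [lia | lia |].
  rewrite /tjdt /= ifF ?ifT ?prednK; try lia.
  apply/negP => /andP[_]; have := row_weak m i.-1; rewrite prednK // in_col; lia.
have [S eqS slide_down] := @slideH_down _ (tjdt lam T i.+1) (c - f) (f + i)
    (tjdt lam T i.+1) c i (fun _ _ _ => erefl) no_left_above (leq_subr _ _).
by rewrite subKn // in eqS slide_down; exists S.
Qed.

Lemma tjdt_southwest x y : 1 < i -> southwest f i x y ->
  tjdt lam T i.+1 x y = T x y /\ in_shape (tjdt_shape lam i.+1) x y = in_shape lam x y.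
Proof.
move=> i_gt1 sw_xy; have [_ f_le_c _ _] := frow_spec.
rewrite /tjdt /= (in_shape_tjdt_shape lam_part i_gt1 nth_colLen_addable).
rewrite /southwest in sw_xy.
split; first by rewrite ifF //; lia.
by rewrite (_ : (x == c) && (y == i) = false) ?andbT //; lia.
Qed.

End FirstHorizontalMove.

Theorem lemma6p4 (i : nat) (lam : seq nat) (T : nat -> nat -> nat) :
  1 <= i -> is_SSRT lam T -> has_addable_col lam i.+1 ->
  perm_eq (Hset (tjdt_shape lam i.+1) (tjdt lam T i.+1) i ++ [:: fval lam T i.+1])
          (Hset lam T i.+1).
Proof.
move=> i_gt0 T_SSRT [r addable_r].
have [S eqS ->] := Hset_succ_split i_gt0 T_SSRT addable_r.
rewrite /fval cats1 perm_rcons perm_cons.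
have [i_gt1 | i_le1] := ltnP 1 i; last first.
  by rewrite (_ : i = 1) ?slideH_col1; last lia.
have [S' eqS' ->] := Hset_tjdt_split i_gt0 T_SSRT addable_r i_gt1.
rewrite (@slideH_ext _ lam _ _ S) // => x y sw_xy.
have [eqT eq_shape] := tjdt_southwest i_gt0 T_SSRT addable_r i_gt1 sw_xy.
by rewrite eqS' // eqS // eqT.
Qed.
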